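(* In the standing setting, for all $A',B'\in Q'$: there exist $A,B\in Q$ with $g(A)=A'$, $g(B)=B'$ and $B\subseteq A$ if and only if $B'\subseteq A'$. (That is, the relation on $Q'$ induced from inclusion on $Q$ via $g$ coincides with inclusion on $Q'$.)
   Context: Standing setting: $(P,\preceq)$ is a finite poset with a bottom and a top element; $f:P\to P'$ is a surjective map onto $P'=f(P)$; $f^{-1}(a')=\{a\in P: f(a)=a'\}$; the relation $\preceq'$ on $P'$ is defined by $b'\preceq' a'$ iff there exist $a\in f^{-1}(a')$, $b\in f^{-1}(b')$ with $b\preceq a$. Assume the three conditions: (D) for all $a',b'\in P'$ with $b'\preceq' a'$ and every $a\in f^{-1}(a')$ there is $b\in f^{-1}(b')$ with $b\preceq a$; (U) for all $a',b'\in P'$ with $b'\preceq' a'$ and every $b\in f^{-1}(b')$ there is $a\in f^{-1}(a')$ with $b\preceq a$; (S) for all $a,b,c\in P$, if $c\preceq b\preceq a$ and $f(c)=f(a)$ then $f(b)=f(a)$. (Then $(P',\preceq')$ is a poset.) A down-set of a poset is a subset $A$ such that $a\in A$ and $b\preceq a$ imply $b\in A$. $Q$ is the set of nonempty down-sets of $(P,\preceq)$ and $Q'$ the set of nonempty down-sets of $(P',\preceq')$, each ordered by inclusion. $g:2^P\to 2^{P'}$ is $g(A)=\{f(a):a\in A\}$. *)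

From mathcomp Require Import all_boot.
Set Implicit Arguments. Unset Strict Implicit. Unset Printing Implicit Defensive.

Definition is_poset (T : finType) (le : rel T) : Prop :=
  [/\ reflexive le, antisymmetric le & transitive le].

Definition induced_rel (P P' : finType) (le : rel P) (f : P -> P') : rel P' :=
  fun b' a' => [exists a, exists b, [&& f a == a', f b == b' & le b a]].

Definition condD (P P' : finType) (le : rel P) (f : P -> P') : Prop :=
  forall a' b', induced_rel le f b' a' ->
    forall a, f a = a' -> exists2 b, f b = b' & le b a.

Definition condU (P P' : finType) (le : rel P) (f : P -> P') : Prop :=
  forall a' b', induced_rel le f b' a' ->
    forall b, f b = b' -> exists2 a, f a = a' & le b a.

Definition condS (P P' : finType) (le : rel P) (f : P -> P') : Prop :=
  forall a b c, le c b -> le b a -> f c = f a -> f b = f a.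

Definition downset (T : finType) (le : rel T) (A : {set T}) : Prop :=
  forall a b, a \in A -> le b a -> b \in A.

(* Elements of Q (resp. Q'): nonempty down-sets *)
Definition inQ (T : finType) (le : rel T) (A : {set T}) : Prop :=
  A != set0 /\ downset le A.

Definition gmap (P P' : finType) (f : P -> P') (A : {set P}) : {set P'} := f @: A.

From mathcomp Require Import all_boot.
Set Implicit Arguments. Unset Strict Implicit. Unset Printing Implicit Defensive.

(* One direction is monotonicity of images: B \subset A gives g B \subset g A.
   For the converse, every nonempty down-set X' of the induced order on P' is
   the image of a nonempty down-set of P, namely its full preimage f^-1(X'):
   - the preimage of a down-set of the induced relation is a down-set of P,
     since b <= a forces f b <=' f a by the very definition of <=';
   - for surjective f, the preimage of a nonempty set is nonempty and the image
     of the preimage gives back the set.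
   Preimages are monotone, so B' \subset A' lifts to f^-1(B') \subset f^-1(A'). *)

Section Preimages.

Variables (P P' : finType) (f : P -> P').

Lemma induced_rel_image (le : rel P) (a b : P) :
  le b a -> induced_rel le f (f b) (f a).
Proof.
by move=> le_ba; apply/existsP; exists a; apply/existsP; exists b; rewrite !eqxx.
Qed.

Lemma downset_preimset (le : rel P) (X' : {set P'}) :
  downset (induced_rel le f) X' -> downset le (f @^-1: X').
Proof.
move=> dX a b; rewrite !inE => Xfa le_ba.
exact: dX Xfa (induced_rel_image le_ba).
Qed.

Hypothesis f_surj : forall a' : P', exists a, f a = a'.

Lemma imset_preimset_surj (X' : {set P'}) : f @: (f @^-1: X') = X'.
Proof.
apply/setP=> y; apply/imsetP/idP => [[x] | Xy].
  by rewrite inE => Xfx ->.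
by have [x fx] := f_surj y; exists x; rewrite ?inE fx.
Qed.

Lemma preimset_neq0 (X' : {set P'}) : X' != set0 -> f @^-1: X' != set0.
Proof.
case/set0Pn=> y Xy; have [x fx] := f_surj y.
by apply/set0Pn; exists x; rewrite inE fx.
Qed.

Lemma inQ_preimset (le : rel P) (X' : {set P'}) :
  inQ (induced_rel le f) X' ->
  inQ le (f @^-1: X') /\ gmap f (f @^-1: X') = X'.
Proof.
move=> [X'_neq0 dX]; split; last exact: imset_preimset_surj.
by split; [exact: preimset_neq0 | exact: downset_preimset].
Qed.

End Preimages.

Theorem lemma5 (P P' : finType) (le : rel P) (f : P -> P')
  (bot top : P)
  (Hposet : is_poset le)
  (Hbot : forall x, le bot x) (Htop : forall x, le x top)
  (Hsurj : forall a' : P', exists a, f a = a')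
  (HD : condD le f) (HU : condU le f) (HS : condS le f)
  (A' B' : {set P'})
  (HA' : inQ (induced_rel le f) A') (HB' : inQ (induced_rel le f) B') :
  (exists A B : {set P},
      [/\ inQ le A, inQ le B, gmap f A = A', gmap f B = B' & B \subset A])
  <-> B' \subset A'.
Proof.
split=> [[A [B [_ _ <- <- sBA]]] | sB'A']; first exact: imsetS.
have [QA gA] := inQ_preimset Hsurj HA'.
have [QB gB] := inQ_preimset Hsurj HB'.
by exists (f @^-1: A'), (f @^-1: B'); split=> //; exact: preimsetS.
Qed.
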